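(* Let $\kappa$ be a regular infinite cardinal and let $\langle W^\kappa,(T_i)_{i\in\{a,b\}},\theta\rangle$ be the $*$-type space on $S=\{h,t\}$ for players $\{a,b\}$ described in the context. For every ordinal $\alpha<\kappa$ there are $u^\kappa,w^\kappa\in W^\kappa$ such that (1) for every $\kappa$-expression $\varphi$ with $\mathrm{dp}(\varphi)\le\alpha$, $u^\kappa\in\varphi^{W^\kappa}$ iff $w^\kappa\in\varphi^{W^\kappa}$; and (2) there is a $\kappa$-expression $\psi$ with $\mathrm{dp}(\psi)=\alpha+1$ such that $u^\kappa\in\psi^{W^\kappa}$ and $w^\kappa\in(\neg\psi)^{W^\kappa}$.
   Context: Records: for $\alpha\ge1$, a record of length $\alpha$ is $r\in\{0,1\}^\alpha$ such that for every limit $\lambda\le\alpha$ there is $\gamma<\lambda$ with $r(\beta)=0$ for $\gamma\le\beta<\lambda$. Parity: finite ordinals usual (0 even); infinite $\hat\lambda+n$ ($\hat\lambda$ limit) has the parity of $n$. For limit $\lambda\le\alpha$, $o^\lambda(r)$ is the least ordinal $<\lambda$ after which $r$ is $0$ below $\lambda$; $\lambda\text{-par}(r)$ is its parity. $W^0=\{h,t\}$; $W^\alpha$ ($\alpha\ge1$) = triples $(w_0,w_a^\alpha,w_b^\alpha)$, $w_0\in\{h,t\}$, $w_a^\alpha,w_b^\alpha$ records of length $\alpha$; $w^\alpha\upharpoonright\beta$ restricts both records (and $w^\alpha\upharpoonright0=w_0$); $\pi_{\beta,\alpha}(w^\alpha)=w^\alpha\upharpoonright\beta$. For $i\in\{a,b\}$,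 $j$ the other player, $P_i(w^\alpha)$: set of $v^\alpha$ with $v_i^\alpha=w_i^\alpha$; $w_i^\alpha(0)=1\Rightarrow v_0=w_0$; $w_i^\alpha(\beta+1)=1\Rightarrow v_j^\alpha(\beta)=w_j^\alpha(\beta)$ ($\beta+1<\alpha$); $w_i^\alpha(\lambda)=1\Rightarrow\lambda\text{-par}(v_j^\alpha)=\lambda\text{-par}(w_j^\alpha)$ (limit $\lambda<\alpha$). $T_a,T_b$ map $W^\kappa$ into finitely additive probability measures on $\mathrm{Pow}(W^\kappa)$ and satisfy for all $w^\kappa$: (a) $T_i$ constant on $P_i(w^\kappa)$; (b) $T_i(w^\kappa)(P_i(w^\kappa))=1$; (c) $T_i(w^\kappa)(\{u:u_0=w_0\})=1$ if $w_i^\kappa(0)=1$, $\frac12$ otherwise; (d) for $\beta<\kappa$, $T_i(w^\kappa)(\{u:u_j^\kappa(\beta)=w_j^\kappa(\beta)\})=1$ if $w_i^\kappa(\beta+1)=1$, $\frac12$ otherwise; (e) for limit $\lambda<\kappa$, $T_i(w^\kappa)(\{u:\lambda\text{-par}(u_j^\kappa)=\lambda\text{-par}(w_j^\kappa)\})=1$ if $w_i^\kappa(\lambda)=1$, $\frac12$ otherwise; (f) for $\beta<\alpha<\kappa$, $E^\beta\subseteq W^\beta$, $u^\kappa\upharpoonright\alpha=w^\kappa\upharpoonright\alpha$ implies equal $T_i$-values on $\pi_{\beta,\kappa}^{-1}(E^\beta)$ (such $T_a,T_b$ exist). $\theta(w^\kappa)=w_0$. $\kappa$-expressions over $\Sigma_S=\mathrm{Pow}(\{h,t\})$,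 $I=\{a,b\}$: least set containing each $E\subseteq\{h,t\}$ and closed under $\neg$, $B_i^p$ ($p\in[0,1]$), and conjunctions of fewer than $\kappa$ (nonempty) expressions. Semantics: $E^{W^\kappa}=\theta^{-1}(E)$, complement, $(B_i^p\varphi)^{W^\kappa}=\{w:T_i(w)(\varphi^{W^\kappa})\ge p\}$, intersection. Depth: $\mathrm{dp}(E)=0$, $\mathrm{dp}(\neg\varphi)=\mathrm{dp}(\varphi)$, $\mathrm{dp}(B_i^p\varphi)=\mathrm{dp}(\varphi)+1$, $\mathrm{dp}(\bigwedge\Psi)=\sup_{\varphi\in\Psi}\mathrm{dp}(\varphi)$. *)

From Stdlib Require Import Reals.
Open Scope R_scope.

(* The ordinals below a regular infinite cardinal kappa, presented as a
   well-ordered type whose order type is a regular infinite initial ordinal. *)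
Record RegCard := {
  Ord :> Type;
  olt : Ord -> Ord -> Prop;
  olt_irrefl : forall x, ~ olt x x;
  olt_trans : forall x y z, olt x y -> olt y z -> olt x z;
  olt_total : forall x y, olt x y \/ x = y \/ olt y x;
  olt_wf : well_founded olt;
  (* kappa is a cardinal: it does not inject into any smaller ordinal *)
  ocard : forall x : Ord,
      ~ exists f : Ord -> {y : Ord | olt y x},
          forall a b, f a = f b -> a = b;
  oinf : exists f : nat -> Ord, forall m n, f m = f n -> m = n;
  (* kappa is regular: every subset of size < kappa is bounded below kappa *)
  oreg : forall S : Ord -> Prop,
      (~ exists f : Ord -> {y : Ord | S y}, forall a b, f a = f b -> a = b) ->
      exists b : Ord, forall y, S y -> olt y b
}.

Section Ordinals.
Variable k : RegCard.

Definition ole (x y : k) : Prop := olt k x y \/ x = y.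
Definition is_zero (z : k) : Prop := forall x, ~ olt k x z.
Definition is_limit (l : k) : Prop :=
  (exists x, olt k x l) /\ forall x, olt k x l -> exists y, olt k x y /\ olt k y l.
Definition succ_of (x s : k) : Prop :=
  olt k x s /\ forall y, olt k x y -> ole s y.

Inductive fin_from (g : k) : k -> nat -> Prop :=
| ff_base : fin_from g g 0
| ff_step : forall x y n, fin_from g x n -> succ_of x y -> fin_from g y (S n).

Definition ord_even (b : k) : Prop :=
  exists g n, (is_zero g \/ is_limit g) /\ fin_from g b n /\ Nat.even n = true.

Definition zero_from (r : k -> bool) (g l : k) : Prop :=
  forall b, ole g b -> olt k b l -> r b = false.

(* record of length kappa: condition for each limit l < kappa and for kappa *)
Definition is_record (r : k -> bool) : Prop :=
  (forall l, is_limit l -> exists g, olt k g l /\ zero_from r g l) /\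
  (exists g, forall b, ole g b -> r b = false).

Definition o_lim (l : k) (r : k -> bool) (g : k) : Prop :=
  olt k g l /\ zero_from r g l /\
  forall g', olt k g' l -> zero_from r g' l -> ole g g'.

Definition same_lpar (l : k) (r s : k -> bool) : Prop :=
  forall g d, o_lim l r g -> o_lim l s d -> (ord_even g <-> ord_even d).


Inductive coin := h | t.
Inductive player := pa | pb.
Definition other (i : player) : player := match i with pa => pb | pb => pa end.

Record W := mkW {
  w0 : coin;
  wa : k -> bool;
  wb : k -> bool;
  wa_rec : is_record wa;
  wb_rec : is_record wb
}.

Definition recof (i : player) (w : W) : k -> bool :=
  match i with pa => wa w | pb => wb w end.

Definition theta (w : W) : coin := w0 w.

Definition P (i : player) (w v : W) : Prop :=
  (forall x, recof i v x = recof i w x) /\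
  (forall z, is_zero z -> recof i w z = true -> w0 v = w0 w) /\
  (forall b s, succ_of b s -> recof i w s = true ->
       recof (other i) v b = recof (other i) w b) /\
  (forall l, is_limit l -> recof i w l = true ->
       same_lpar l (recof (other i) v) (recof (other i) w)).

Definition fapm (mu : (W -> Prop) -> R) : Prop :=
  (forall A, 0 <= mu A) /\ mu (fun _ => True) = 1 /\
  (forall A B, (forall x, A x -> B x -> False) ->
     mu (fun x => A x \/ B x) = mu A + mu B).

(* W^b for b < kappa (the record condition on the codomain is omitted,
   which does not change the family of preimages pi^{-1}(E)) *)
Definition Wres (b : k) : Type :=
  (coin * ({x : k | olt k x b} -> bool) * ({x : k | olt k x b} -> bool))%type.
Definition restrict (b : k) (w : W) : Wres b :=
  (w0 w, fun x => wa w (proj1_sig x), fun x => wb w (proj1_sig x)).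

Definition agree_below (a : k) (u w : W) : Prop :=
  w0 u = w0 w /\ forall x, olt k x a -> wa u x = wa w x /\ wb u x = wb w x.

Definition star_type_space (T : player -> W -> (W -> Prop) -> R) : Prop :=
  (forall i w, fapm (T i w)) /\
  (forall i w v, P i w v -> forall A, T i v A = T i w A) /\
  (forall i w, T i w (P i w) = 1) /\
  (forall i w z, is_zero z ->
     T i w (fun u => w0 u = w0 w) = if recof i w z then 1 else / 2) /\
  (forall i w b s, succ_of b s ->
     T i w (fun u => recof (other i) u b = recof (other i) w b)
       = if recof i w s then 1 else / 2) /\
  (forall i w l, is_limit l ->
     T i w (fun u => same_lpar l (recof (other i) u) (recof (other i) w))
       = if recof i w l then 1 else / 2) /\
  (forall i b a (E : Wres b -> Prop) u w, olt k b a -> agree_below a u w ->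
     T i u (fun x => E (restrict b x)) = T i w (fun x => E (restrict b x))).

Inductive expr :=
| Atom (E : coin -> Prop)
| Neg (phi : expr)
| Bel (i : player) (p : R) (phi : expr)
| Conj (b : k) (f : k -> expr).

Fixpoint wf (phi : expr) : Prop :=
  match phi with
  | Atom _ => True
  | Neg p => wf p
  | Bel _ p q => 0 <= p <= 1 /\ wf q
  | Conj b f => (exists x, olt k x b) /\ forall x, olt k x b -> wf (f x)
  end.

Fixpoint sem (T : player -> W -> (W -> Prop) -> R) (phi : expr) : W -> Prop :=
  match phi with
  | Atom E => fun w => E (theta w)
  | Neg p => fun w => ~ sem T p w
  | Bel i p q => fun w => T i w (sem T q) >= p
  | Conj b f => fun w => forall x, olt k x b -> sem T (f x) w
  end.

Fixpoint depth_le (phi : expr) (a : k) : Prop :=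
  match phi with
  | Atom _ => True
  | Neg p => depth_le p a
  | Bel _ _ q => exists g, olt k g a /\ depth_le q g
  | Conj b f => forall x, olt k x b -> depth_le (f x) a
  end.

End Ordinals.

Arguments expr {k}.
Arguments W {k}.

(* Let [u] and [w] differ only in entry [a] of player [pa]'s record, which is 1 in
   [u] and 0 in [w].  Property (f) of the type space makes every expression of depth
   at most [a] blind to differences at or above [a], so [u] and [w] satisfy the same
   such expressions.  Conversely, by induction on [x] there is, for each player [j],
   an expression of depth [x + 1] true exactly when entry [x] of [j]'s record is 1:
   "[j] is certain of [Z] or certain of not [Z]", where [Z] has depth [x] and
   expresses the coin ([x = 0]), entry [d] of the other player's record
   ([x = d + 1], induction hypothesis), or the parity of [o^x] of the other
   player's record ([x] limit, assembled from the expressions for the entries below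
   [x]).  By (c)-(e), [j] gives [Z] probability 1 when the entry is 1 and 1/2
   otherwise.  For [x = a] this expression separates [u] from [w], hence its depth
   exceeds [a]. *)

From Stdlib Require Import Reals Lra Lia Bool FinFun.
From Stdlib Require Import ClassicalEpsilon FunctionalExtensionality PropExtensionality.
Open Scope R_scope.

Lemma pred_ext (A : Type) (P Q : A -> Prop) : (forall x, P x <-> Q x) -> P = Q.
Proof.
  intro H; apply functional_extensionality; intro x.
  apply propositional_extensionality, H.
Qed.

Lemma nat_injection_from (A : Type) (e : nat -> A) (x : A) :
  Injective e -> exists f : nat -> A, Injective f /\ f 0%nat = x.
Proof.
  intros e_inj.
  (* [f (S n)] is [e (2n)], or [e (2n+1)] when [e (2n) = x]: [x] is only hit at 0 *)
  set (f n := match n with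
              | O => x
              | S n => if excluded_middle_informative (e (2 * n)%nat = x)
                       then e (S (2 * n)) else e (2 * n)%nat
              end).
  exists f; split; [|reflexivity].
  assert (f_ne_x : forall n, f (S n) <> x).
  { intros n; simpl f; destruct excluded_middle_informative as [E|E]; auto.
    rewrite <- E; intro E'; apply e_inj in E'; lia. }
  intros [|m] [|n] E; auto.
  - symmetry in E; contradiction (f_ne_x n).
  - contradiction (f_ne_x m).
  - f_equal; revert E; simpl f.
    destruct excluded_middle_informative, excluded_middle_informative;
      intro E; apply e_inj in E; lia.
Qed.

Lemma hilbert_hotel (A : Type) (f : nat -> A) :
  Injective f -> exists g : A -> A, Injective g /\ forall a, g a <> f 0%nat.
Proof.
  intros f_inj.
  set (g a := match excluded_middle_informative (exists n, a = f n) with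
              | left p => f (S (proj1_sig (constructive_indefinite_description _ p)))
              | right _ => a
              end).
  exists g; split.
  - intros a b; unfold g.
    destruct excluded_middle_informative as [pa|pa],
             excluded_middle_informative as [pb|pb].
    + destruct (constructive_indefinite_description _ pa) as [m Hm].
      destruct (constructive_indefinite_description _ pb) as [n Hn]; simpl.
      intro E; apply f_inj in E; injection E as ->; congruence.
    + destruct (constructive_indefinite_description _ pa) as [m Hm]; simpl.
      intros <-; contradiction pb; eauto.
    + destruct (constructive_indefinite_description _ pb) as [n Hn]; simpl.
      intros ->; contradiction pa; eauto.
    + auto.
  - intros a; unfold g; destruct excluded_middle_informative as [p|p].
    + destruct (constructive_indefinite_description _ p) as [n Hn]; simpl.
      intro E; apply f_inj in E; discriminate.
    + intro E; contradiction p; eauto.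
Qed.

Lemma infinite_self_injection_avoiding (A : Type) (e : nat -> A) (x : A) :
  Injective e -> exists g : A -> A, Injective g /\ forall a, g a <> x.
Proof.
  intros e_inj.
  destruct (nat_injection_from A e x e_inj) as [f [f_inj <-]].
  exact (hilbert_hotel A f f_inj).
Qed.

Section Ordinals.
Variable k : RegCard.

Lemma ole_not_olt (x y : k) : ole k x y -> ~ olt k y x.
Proof.
  intros [Hxy| <-] Hyx; [|exact (olt_irrefl k x Hyx)].
  exact (olt_irrefl k x (olt_trans k _ _ _ Hxy Hyx)).
Qed.

Lemma not_olt_ole (x y : k) : ~ olt k x y -> ole k y x.
Proof.
  intros H; destruct (olt_total k x y) as [|[->|]]; [contradiction|right|left]; auto.
Qed.

Lemma olt_ole_trans (x y z : k) : olt k x y -> ole k y z -> olt k x z.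
Proof. intros Hxy [Hyz| <-]; [exact (olt_trans k _ _ _ Hxy Hyz)|exact Hxy]. Qed.

Lemma exists_least (S : k -> Prop) :
  (exists x, S x) -> exists m, S m /\ forall y, S y -> ole k m y.
Proof.
  intros [x Sx]; apply NNPP; intro no_least.
  assert (never : forall z, ~ S z).
  { intro z; induction z as [z IH] using (well_founded_ind (olt_wf k)).
    intro Sz; apply no_least; exists z; split; [exact Sz|].
    intros y Sy; apply not_olt_ole; intro Hyz; exact (IH y Hyz Sy). }
  exact (never x Sx).
Qed.

Lemma exists_zero : exists z : k, is_zero k z.
Proof.
  destruct (oinf k) as [e _].
  destruct (exists_least (fun _ => True)) as [m [_ least]]; [now exists (e 0%nat)|].
  exists m; intros x Hx; exact (ole_not_olt _ _ (least x I) Hx).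
Qed.

(* A maximal [x] would give, by Hilbert's hotel, an injection of [k] into
   [{y | olt k y x}], against [ocard]. *)
Lemma olt_unbounded (x : k) : exists y, olt k x y.
Proof.
  apply NNPP; intro x_max.
  assert (below_x : forall y, y <> x -> olt k y x).
  { intros y Hy; destruct (olt_total k y x) as [|[|Hxy]]; auto; try contradiction.
    contradiction x_max; eauto. }
  destruct (oinf k) as [e e_inj].
  destruct (infinite_self_injection_avoiding k e x e_inj) as [g [g_inj g_ne_x]].
  apply (ocard k x); exists (fun y => exist _ (g y) (below_x _ (g_ne_x y))).
  intros a b E; apply g_inj; exact (f_equal (@proj1_sig _ _) E).
Qed.

Lemma exists_succ (x : k) : exists s, succ_of k x s.
Proof.
  destruct (exists_least (olt k x)) as [s [Hxs least]]; [apply olt_unbounded|].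
  exists s; split; assumption.
Qed.

Lemma zero_succ_or_limit (x : k) :
  is_zero k x \/ (exists d, succ_of k d x) \/ is_limit k x.
Proof.
  destruct (classic (is_zero k x)) as [|not_zero]; [now left|right].
  destruct (classic (exists d, succ_of k d x)) as [|no_pred]; [now left|right].
  split.
  - apply NNPP; intro H; apply not_zero; intros y Hy; apply H; eauto.
  - intros y Hy; apply NNPP; intro H; apply no_pred; exists y; split; [exact Hy|].
    intros z Hz; apply not_olt_ole; intro Hzx; apply H; eauto.
Qed.

Definition single_bit (x : k) : k -> bool :=
  fun y => if excluded_middle_informative (y = x) then true else false.

Lemma single_bit_at (x : k) : single_bit x x = true.
Proof. unfold single_bit; destruct excluded_middle_informative; congruence. Qed.

Lemma single_bit_below (x y : k) : olt k y x -> single_bit x y = false.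
Proof.
  intro Hyx; unfold single_bit; destruct excluded_middle_informative as [->|]; auto.
  contradiction (olt_irrefl k x Hyx).
Qed.

Lemma is_record_false : is_record k (fun _ => false).
Proof.
  split.
  - intros l [[g Hg] _]; now exists g.
  - destruct exists_zero as [z _]; now exists z.
Qed.

Lemma is_record_single_bit (x : k) : is_record k (single_bit x).
Proof.
  assert (zero_above : forall g b, olt k x g -> ole k g b -> single_bit x b = false).
  { intros g b Hxg Hgb; unfold single_bit.
    destruct excluded_middle_informative as [->|]; [|reflexivity].
    contradiction (olt_irrefl k x (olt_ole_trans _ _ _ Hxg Hgb)). }
  split.
  - intros l [[g Hg] l_limit].
    destruct (classic (olt k x l)) as [Hxl|Hxl].
    + destruct (l_limit x Hxl) as [y [Hxy Hyl]].
      exists y; split; [exact Hyl|]; intros b Hyb _; exact (zero_above y b Hxy Hyb).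
    + exists g; split; [exact Hg|]; intros b _ Hbl; unfold single_bit.
      destruct excluded_middle_informative as [->|]; [contradiction|reflexivity].
  - destruct (olt_unbounded x) as [s Hxs].
    exists s; intros b; exact (zero_above s b Hxs).
Qed.

Lemma recof_is_record (i : player) (w : @W k) : is_record k (recof k i w).
Proof. destruct i; [apply wa_rec|apply wb_rec]. Qed.

Definition lpar_even (l : k) (r : k -> bool) : Prop :=
  exists g, o_lim k l r g /\ ord_even k g.

Lemma o_lim_exists (l : k) (r : k -> bool) :
  is_record k r -> is_limit k l -> exists g, o_lim k l r g.
Proof.
  intros [r_lim _] l_limit.
  destruct (exists_least (fun g => olt k g l /\ zero_from k r g l))
    as [m [[Hml Hm] least]]; [apply r_lim, l_limit|].
  exists m; split; [exact Hml|split; [exact Hm|]].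
  intros g' Hg' Zg'; exact (least g' (conj Hg' Zg')).
Qed.

Lemma o_lim_unique (l : k) (r : k -> bool) (g d : k) :
  o_lim k l r g -> o_lim k l r d -> g = d.
Proof.
  intros [Hgl [Zg least_g]] [Hdl [Zd least_d]].
  destruct (least_g d Hdl Zd) as [Hgd|]; [|assumption].
  contradiction (ole_not_olt _ _ (least_d g Hgl Zg) Hgd).
Qed.

Lemma same_lpar_iff (l : k) (r s : k -> bool) :
  is_record k r -> is_record k s -> is_limit k l ->
  same_lpar k l r s <-> (lpar_even l r <-> lpar_even l s).
Proof.
  intros r_rec s_rec l_limit.
  destruct (o_lim_exists l r r_rec l_limit) as [g Hg].
  destruct (o_lim_exists l s s_rec l_limit) as [d Hd].
  assert (lpar_r : lpar_even l r <-> ord_even k g).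
  { split.
    - intros [g' [Hg' E]]; now rewrite (o_lim_unique _ _ _ _ Hg Hg').
    - intro E; now exists g. }
  assert (lpar_s : lpar_even l s <-> ord_even k d).
  { split.
    - intros [d' [Hd' E]]; now rewrite (o_lim_unique _ _ _ _ Hd Hd').
    - intro E; now exists d. }
  rewrite lpar_r, lpar_s; split.
  - intro H; exact (H g d Hg Hd).
  - intros H g' d' Hg' Hd'.
    now rewrite <- (o_lim_unique _ _ _ _ Hg Hg'), <- (o_lim_unique _ _ _ _ Hd Hd').
Qed.

End Ordinals.

Section Expressions.
Variable k : RegCard.

Lemma exists_pair_bound :
  exists b z y : k, is_zero k z /\ olt k z y /\ olt k y b.
Proof.
  destruct (exists_zero k) as [z Hz].
  destruct (olt_unbounded k z) as [y Hzy].
  destruct (olt_unbounded k y) as [b Hyb].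
  exists b, z, y; auto.
Qed.

(* Binary conjunctions are conjunctions indexed below [pair_bound], which has a
   zero and a non-zero ordinal below it. *)
Definition pair_bound : k :=
  proj1_sig (constructive_indefinite_description _ exists_pair_bound).

Definition Cst (P : Prop) : @expr k := Atom k (fun _ => P).
Definition And (A B : @expr k) : @expr k :=
  Conj k pair_bound (fun y => if excluded_middle_informative (is_zero k y) then A else B).
Definition Or (A B : @expr k) : @expr k := Neg k (And (Neg k A) (Neg k B)).
Definition Imp (A B : @expr k) : @expr k := Or (Neg k A) B.
Definition Disj (b : k) (f : k -> @expr k) : @expr k :=
  Neg k (Conj k b (fun x => Neg k (f x))).

Definition wf_le (a : k) (phi : @expr k) : Prop := wf k phi /\ depth_le k phi a.

Lemma wf_le_Cst (a : k) (P : Prop) : wf_le a (Cst P).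
Proof. split; exact I. Qed.

Lemma wf_le_Neg (a : k) (A : @expr k) : wf_le a A -> wf_le a (Neg k A).
Proof. intro H; exact H. Qed.

Lemma wf_le_Conj (a b : k) (f : k -> @expr k) :
  (exists x, olt k x b) -> (forall x, olt k x b -> wf_le a (f x)) ->
  wf_le a (Conj k b f).
Proof. intros Hb Hf; split; [split; [exact Hb|]|]; intros x Hx; apply Hf, Hx. Qed.

Lemma wf_le_Bel (a g : k) (i : player) (p : R) (A : @expr k) :
  0 <= p <= 1 -> olt k g a -> wf_le g A -> wf_le a (Bel k i p A).
Proof. intros Hp Hga [HA dA]; split; [split|exists g; split]; assumption. Qed.

Lemma wf_le_And (a : k) (A B : @expr k) : wf_le a A -> wf_le a B -> wf_le a (And A B).
Proof.
  intros HA HB; apply wf_le_Conj.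
  - destruct (proj2_sig (constructive_indefinite_description _ exists_pair_bound))
      as [z [y [_ [Hzy Hyb]]]].
    exists z; exact (olt_trans k _ _ _ Hzy Hyb).
  - intros x _; destruct excluded_middle_informative; assumption.
Qed.

Lemma wf_le_Or (a : k) (A B : @expr k) : wf_le a A -> wf_le a B -> wf_le a (Or A B).
Proof. intros HA HB; apply wf_le_Neg, wf_le_And; apply wf_le_Neg; assumption. Qed.

Lemma wf_le_Imp (a : k) (A B : @expr k) : wf_le a A -> wf_le a B -> wf_le a (Imp A B).
Proof. intros HA HB; apply wf_le_Or; [apply wf_le_Neg|]; assumption. Qed.

Lemma wf_le_Disj (a b : k) (f : k -> @expr k) :
  (exists x, olt k x b) -> (forall x, olt k x b -> wf_le a (f x)) ->
  wf_le a (Disj b f).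
Proof. intros Hb Hf; apply wf_le_Neg, wf_le_Conj; [|intros x Hx; apply wf_le_Neg]; auto. Qed.

Variable T : player -> @W k -> (@W k -> Prop) -> R.

Lemma sem_Neg (A : @expr k) (w : @W k) : sem k T (Neg k A) w <-> ~ sem k T A w.
Proof. reflexivity. Qed.

Lemma sem_Conj (b : k) (f : k -> @expr k) (w : @W k) :
  sem k T (Conj k b f) w <-> forall x, olt k x b -> sem k T (f x) w.
Proof. reflexivity. Qed.

Lemma sem_And (A B : @expr k) (w : @W k) :
  sem k T (And A B) w <-> sem k T A w /\ sem k T B w.
Proof.
  unfold And; simpl; split.
  - destruct (proj2_sig (constructive_indefinite_description _ exists_pair_bound))
      as [z [y [Hz [Hzy Hyb]]]].
    intro H; split.
    + generalize (H z (olt_trans k _ _ _ Hzy Hyb)).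
      destruct excluded_middle_informative; [intro HA; exact HA|contradiction].
    + generalize (H y Hyb).
      destruct excluded_middle_informative as [Hy|];
        [contradiction (Hy z Hzy)|intro HB; exact HB].
  - intros [HA HB] y _; destruct excluded_middle_informative; assumption.
Qed.

Lemma sem_Or (A B : @expr k) (w : @W k) :
  sem k T (Or A B) w <-> sem k T A w \/ sem k T B w.
Proof. unfold Or; rewrite sem_Neg, sem_And, !sem_Neg; tauto. Qed.

Lemma sem_Imp (A B : @expr k) (w : @W k) :
  sem k T (Imp A B) w <-> (sem k T A w -> sem k T B w).
Proof. unfold Imp; rewrite sem_Or, sem_Neg; tauto. Qed.

Lemma sem_Disj (b : k) (f : k -> @expr k) (w : @W k) :
  sem k T (Disj b f) w <-> exists x, olt k x b /\ sem k T (f x) w.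
Proof.
  unfold Disj; rewrite sem_Neg; simpl; split.
  - intro H; apply NNPP; intro none; apply H; intros x Hx Hf; apply none; eauto.
  - intros [x [Hx Hf]] H; exact (H x Hx Hf).
Qed.

Definition expresses (phi : @expr k) (P : @W k -> Prop) : Prop :=
  forall w, sem k T phi w <-> P w.

End Expressions.

Section LimitParity.
Variables (k : RegCard) (F : k -> @expr k) (l : k).

Definition zero_from_expr (g : k) : @expr k :=
  Conj k l (fun y => Imp k (Cst k (ole k g y)) (Neg k (F y))).

Definition o_lim_expr (g : k) : @expr k :=
  And k (Cst k (olt k g l))
    (And k (zero_from_expr g)
       (Conj k l (fun g' => Imp k (zero_from_expr g') (Cst k (ole k g g'))))).

Definition lpar_even_expr : @expr k :=
  Disj k l (fun g => And k (Cst k (ord_even k g)) (o_lim_expr g)).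

Lemma wf_le_lpar_even_expr :
  is_limit k l -> (forall y, olt k y l -> wf_le k l (F y)) -> wf_le k l lpar_even_expr.
Proof.
  intros [l_nonzero _] HF.
  assert (wf_le_zero_from : forall g, wf_le k l (zero_from_expr g)).
  { intro g; apply wf_le_Conj; [exact l_nonzero|].
    intros y Hy; apply wf_le_Imp; [apply wf_le_Cst|apply wf_le_Neg, HF, Hy]. }
  apply wf_le_Disj; [exact l_nonzero|]; intros g _.
  apply wf_le_And; [apply wf_le_Cst|].
  apply wf_le_And; [apply wf_le_Cst|apply wf_le_And; [apply wf_le_zero_from|]].
  apply wf_le_Conj; [exact l_nonzero|]; intros g' _.
  apply wf_le_Imp; [apply wf_le_zero_from|apply wf_le_Cst].
Qed.

Variables (T : player -> @W k -> (@W k -> Prop) -> R) (r : @W k -> k -> bool).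
Hypothesis F_expresses :
  forall y, olt k y l -> expresses k T (F y) (fun w => r w y = true).

Lemma zero_from_expr_expresses (g : k) :
  expresses k T (zero_from_expr g) (fun w => zero_from k (r w) g l).
Proof.
  intro w; unfold zero_from_expr, zero_from; rewrite sem_Conj; split.
  - intros H b Hgb Hbl; specialize (H b Hbl).
    rewrite sem_Imp, sem_Neg, (F_expresses b Hbl w) in H.
    apply not_true_is_false, H, Hgb.
  - intros H y Hyl; rewrite sem_Imp, sem_Neg, (F_expresses y Hyl w).
    intro Hgy; rewrite (H y Hgy Hyl); discriminate.
Qed.

Lemma o_lim_expr_expresses (g : k) :
  expresses k T (o_lim_expr g) (fun w => o_lim k l (r w) g).
Proof.
  intro w; unfold o_lim_expr, o_lim.
  rewrite !sem_And, (zero_from_expr_expresses g w), sem_Conj.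
  assert (least : forall g', olt k g' l ->
            sem k T (Imp k (zero_from_expr g') (Cst k (ole k g g'))) w <->
            (zero_from k (r w) g' l -> ole k g g')).
  { intros g' _; rewrite sem_Imp, (zero_from_expr_expresses g' w); reflexivity. }
  split.
  - intros [Hgl [Zg H]]; repeat split; [exact Hgl|exact Zg|].
    intros g' Hg'; apply (least g' Hg'), H, Hg'.
  - intros [Hgl [Zg H]]; repeat split; [exact Hgl|exact Zg|].
    intros g' Hg'; apply (least g' Hg'), H, Hg'.
Qed.

Lemma lpar_even_expr_expresses :
  expresses k T lpar_even_expr (fun w => lpar_even k l (r w)).
Proof.
  intro w; unfold lpar_even_expr, lpar_even; rewrite sem_Disj; split.
  - intros [g [_ H]]; rewrite sem_And, (o_lim_expr_expresses g w) in H.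
    destruct H as [Eg Og]; exists g; split; assumption.
  - intros [g [Og Eg]]; exists g; split; [exact (proj1 Og)|].
    rewrite sem_And, (o_lim_expr_expresses g w); split; assumption.
Qed.

End LimitParity.

Definition KnowsWhether (k : RegCard) (j : player) (Z : @expr k) : @expr k :=
  Or k (Bel k j 1 Z) (Bel k j 1 (Neg k Z)).

Section TypeSpace.
Variables (k : RegCard) (T : player -> @W k -> (@W k -> Prop) -> R).

Lemma fapm_compl (mu : (@W k -> Prop) -> R) (A : @W k -> Prop) :
  fapm k mu -> mu (fun x => ~ A x) = 1 - mu A.
Proof.
  intros [_ [mu_total mu_add]].
  assert (split_total : (fun x => A x \/ ~ A x) = (fun _ => True)).
  { apply pred_ext; intro x; split; [trivial|intros _; apply classic]. }
  assert (1 = mu A + mu (fun x => ~ A x)) by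
    (rewrite <- mu_total, <- split_total; apply mu_add; tauto).
  lra.
Qed.

Lemma fapm_certain_either_iff (mu : (@W k -> Prop) -> R) (A Z : @W k -> Prop) (b : bool) :
  fapm k mu -> mu A = (if b then 1 else / 2) -> (Z = A \/ Z = (fun x => ~ A x)) ->
  (mu Z >= 1 \/ mu (fun x => ~ Z x) >= 1 <-> b = true).
Proof.
  intros mu_fapm muA [-> | ->]; rewrite !(fapm_compl mu) by exact mu_fapm; rewrite muA;
    destruct b; split; intro H; auto; lra.
Qed.

Lemma knows_whether_expresses_bit (j : player) (x : k) (Z : @expr k) (P : @W k -> Prop) :
  (forall i w, fapm k (T i w)) -> expresses k T Z P ->
  (forall w, T j w (fun u => P u <-> P w) = if recof k j w x then 1 else / 2) ->
  expresses k T (KnowsWhether k j Z) (fun w => recof k j w x = true).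
Proof.
  intros T_fapm Z_P T_event w; unfold KnowsWhether; rewrite sem_Or; cbn [sem].
  apply (fapm_certain_either_iff (T j w) (fun u => P u <-> P w));
    [apply T_fapm|apply T_event|].
  destruct (classic (P w)) as [Pw|Pw]; [left|right]; apply pred_ext; intro u;
    rewrite (Z_P u); tauto.
Qed.

Hypothesis HT : star_type_space k T.

Lemma sem_agree_below (phi : @expr k) (a : k) (u w : @W k) :
  depth_le k phi a -> agree_below k a u w -> (sem k T phi u <-> sem k T phi w).
Proof.
  revert a u w; induction phi as [E|phi IH|i p phi IH|b f IH]; intros a u w dp_a uw.
  - destruct uw as [E0 _]; cbn [sem]; unfold theta; rewrite E0; reflexivity.
  - cbn [sem]; rewrite (IH a u w dp_a uw); reflexivity.
  - destruct dp_a as [g [Hga dp_g]]; cbn [sem].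
    (* by induction, [sem phi] only depends on the restriction to [g] *)
    set (E := fun r : Wres k g => exists x, restrict k g x = r /\ sem k T phi x).
    assert (factor : sem k T phi = fun x => E (restrict k g x)).
    { apply pred_ext; intro x; split; [intro Hx; exists x; auto|].
      intros [y [Hyx Hy]]; apply (IH g y x dp_g); [|exact Hy].
      injection Hyx as H0 Ha Hb; split; [exact H0|].
      intros z Hz; split.
      - exact (f_equal (fun r => r (exist _ z Hz)) Ha).
      - exact (f_equal (fun r => r (exist _ z Hz)) Hb). }
    destruct HT as [_ [_ [_ [_ [_ [_ T_restrict]]]]]].
    rewrite factor, (T_restrict i g a E u w Hga uw); reflexivity.
  - cbn [sem]; split; intros Hf x Hx; [rewrite <- (IH x a u w)|rewrite (IH x a u w)];
      auto.
Qed.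

(* Entry [x] of [j]'s record tells whether [j] knows if [P] holds, [P] being
   expressed by [Z] at depth [x]. *)
Definition records_certainty (j : player) (x : k) (Z : @expr k) (P : @W k -> Prop) : Prop :=
  wf_le k x Z /\ expresses k T Z P /\
  forall w, T j w (fun u => P u <-> P w) = if recof k j w x then 1 else / 2.

Lemma records_certainty_zero (j : player) (x : k) :
  is_zero k x -> records_certainty j x (Atom k (fun c => c = h)) (fun u => w0 k u = h).
Proof.
  intro x_zero; split; [split; exact I|split; [intro w; reflexivity|]].
  intro w; destruct HT as [_ [_ [_ [T_coin _]]]].
  rewrite <- (T_coin j w x x_zero); f_equal; apply pred_ext; intro u.
  destruct (w0 k u), (w0 k w); intuition congruence.
Qed.

Lemma records_certainty_succ (j : player) (d x : k) (Z : @expr k) :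
  succ_of k d x -> wf_le k x Z ->
  expresses k T Z (fun u => recof k (other j) u d = true) ->
  records_certainty j x Z (fun u => recof k (other j) u d = true).
Proof.
  intros Hdx Z_wf Z_P; split; [exact Z_wf|split; [exact Z_P|]].
  intro w; destruct HT as [_ [_ [_ [_ [T_succ _]]]]].
  rewrite <- (T_succ j w d x Hdx); f_equal; apply pred_ext; intro u.
  split; [apply eq_true_iff_eq|intros ->; reflexivity].
Qed.

Lemma records_certainty_limit (j : player) (x : k) (F : k -> @expr k) :
  is_limit k x ->
  (forall y, olt k y x -> wf_le k x (F y)) ->
  (forall y, olt k y x -> expresses k T (F y) (fun u => recof k (other j) u y = true)) ->
  records_certainty j x (lpar_even_expr k F x) (fun u => lpar_even k x (recof k (other j) u)).
Proof.
  intros x_limit F_wf F_P; split; [apply wf_le_lpar_even_expr; assumption|].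
  split; [apply lpar_even_expr_expresses, F_P|].
  intro w; destruct HT as [_ [_ [_ [_ [_ [T_limit _]]]]]].
  rewrite <- (T_limit j w x x_limit); f_equal; apply pred_ext; intro u.
  symmetry; apply same_lpar_iff; [apply recof_is_record..|exact x_limit].
Qed.

Lemma record_bit_expressible (x : k) (j : player) :
  exists phi, (forall a, olt k x a -> wf_le k a phi) /\
              expresses k T phi (fun w => recof k j w x = true).
Proof.
  revert j; induction x as [x IH] using (well_founded_ind (olt_wf k)); intro j.
  assert (certainty : exists Z P, records_certainty j x Z P).
  { destruct (zero_succ_or_limit k x) as [x_zero|[[d Hdx]|x_limit]].
    - eexists _, _; exact (records_certainty_zero j x x_zero).
    - destruct (IH d (proj1 Hdx) (other j)) as [Z [Z_wf Z_P]].
      eexists _, _; exact (records_certainty_succ j d x Z Hdx (Z_wf x (proj1 Hdx)) Z_P).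
    - destruct (choice (fun y phi => olt k y x ->
                  (forall a, olt k y a -> wf_le k a phi) /\
                  expresses k T phi (fun u => recof k (other j) u y = true)))
        as [F HF].
      { intro y; destruct (classic (olt k y x)) as [Hyx|Hyx].
        - destruct (IH y Hyx (other j)) as [phi Hphi]; exists phi; auto.
        - exists (Cst k True); contradiction. }
      eexists _, _; apply (records_certainty_limit j x F x_limit).
      + intros y Hyx; exact (proj1 (HF y Hyx) x Hyx).
      + intros y Hyx; exact (proj2 (HF y Hyx)). }
  destruct certainty as [Z [P [Z_wf [Z_P T_event]]]].
  exists (KnowsWhether k j Z); split.
  - intros a Hxa; apply wf_le_Or; apply (wf_le_Bel k a x); auto; try lra.
  - apply (knows_whether_expresses_bit j x Z P); [exact (proj1 HT)|exact Z_P|exact T_event].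
Qed.

End TypeSpace.

Lemma exists_agree_below_differ_at (k : RegCard) (a : k) :
  exists u w : @W k, agree_below k a u w /\ wa k u a = true /\ wa k w a = false.
Proof.
  exists (mkW k h (single_bit k a) (fun _ => false)
            (is_record_single_bit k a) (is_record_false k)),
         (mkW k h (fun _ => false) (fun _ => false) (is_record_false k) (is_record_false k)).
  split; [split; [reflexivity|]|split; [apply single_bit_at|reflexivity]].
  intros x Hxa; split; [apply single_bit_below, Hxa|reflexivity].
Qed.

Theorem theorem3 : forall (k : RegCard) (T : player -> @W k -> (@W k -> Prop) -> R),
  star_type_space k T ->
  forall a : k,
  exists u w : @W k,
    (forall phi : @expr k, wf k phi -> depth_le k phi a ->
       (sem k T phi u <-> sem k T phi w)) /\
    (exists (psi : @expr k) (s : k),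
       wf k psi /\ succ_of k a s /\ depth_le k psi s /\ ~ depth_le k psi a /\
       sem k T psi u /\ sem k T (Neg k psi) w).
Proof.
  intros k T HT a.
  destruct (exists_succ k a) as [s Hs].
  destruct (exists_agree_below_differ_at k a) as [u [w [uw [u_a w_a]]]].
  destruct (record_bit_expressible k T HT a pa) as [psi [psi_wf_le psi_bit]].
  destruct (psi_wf_le s (proj1 Hs)) as [psi_wf psi_dp].
  assert (u_psi : sem k T psi u) by (apply psi_bit; exact u_a).
  assert (w_psi : ~ sem k T psi w) by (rewrite (psi_bit w); cbn; congruence).
  exists u, w; split.
  - intros phi _ dp; exact (sem_agree_below k T HT phi a u w dp uw).
  - exists psi, s; do 3 (split; [assumption|]); split; [|split; assumption].
    intro dp; exact (w_psi (proj1 (sem_agree_below k T HT psi a u w dp uw) u_psi)).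
Qed.
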